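(* Let $\Psi$ be the functor generated by a pattern $\{P\}\cup\{(Q_R,q_{R,1},\dots,q_{R,a(R)}):R\in\tau\}$ such that for every $R\in\tau$ and all $1\le i<j\le a(R)$ the images $q_{R,i}(P)$ and $q_{R,j}(P)$ are disjoint subsets of the universe of $Q_R$. If a $\sigma$-structure $A$ has finite duality, then the $\tau$-structure $\Psi A$ also has finite duality.
   Context: A vocabulary is a finite set of relation symbols $R$ each with an arity $a(R)$. A $\sigma$-structure $A$ consists of a nonempty finite universe and, for each $R\in\sigma$, an $a(R)$-ary relation $R(A)$; homomorphisms are relation-preserving maps between universes of structures with the same vocabulary. A set $\mathcal F$ of $\sigma$-structures is a complete set of obstructions for $A$ if for every $\sigma$-structure $B$: $B\to A$ iff no $F\in\mathcal F$ admits a homomorphism to $B$; $A$ has finite duality if it has a finite complete set of obstructions. Pattern functor: fix a $\sigma$-structure $P$ and for each $R\in\tau$ a $\sigma$-structure $Q_R$ with homomorphisms $q_{R,1},\dots,q_{R,a(R)}:P\to Q_R$. For a $\sigma$-structure $A$, $\Psi A$ is the $\tau$-structure whose universe is the set of all homomorphisms $f:P\to A$, and for $R\in\tau$ of arity $r$, $R(\Psi A)$ is the set of tuples $(f_1,\dots,f_r)$ for which there is a homomorphism $g:Q_R\to A$ with $g\circ q_{R,i}=f_i$ for all $i$. *)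

From HB Require Import structures.
From Stdlib Require Import List.
From mathcomp Require Import all_boot.
Set Implicit Arguments. Unset Strict Implicit. Unset Printing Implicit Defensive.

Record vocab := Vocab { sym :> finType; arity : sym -> nat }.

(* A sigma-structure: a finite universe and, for each symbol R, an
   (arity R)-ary relation on it.  Nonemptiness of the universe is NOT
   built in; it is expressed by the predicate [nonempty] below. *)
Record struct (V : vocab) := Struct {
  univ : finType;
  rel : forall R : V, pred ((arity R).-tuple univ) }.
Arguments univ {V}.
Arguments rel {V}.

Definition nonempty (V : vocab) (A : struct V) : bool := 0 < #|univ A|.

Definition is_hom (V : vocab) (A B : struct V) (f : univ A -> univ B) : bool :=
  [forall R : V, forall t : (arity R).-tuple (univ A),
     rel A R t ==> rel B R (map_tuple f t)].
Arguments is_hom {V} A B f.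

Definition hom_exists (V : vocab) (A B : struct V) : Prop :=
  exists f : univ A -> univ B, is_hom A B f.

(* Fs is a complete set of obstructions for A (structures have nonempty
   universes, so B and the members of Fs range over nonempty structures). *)
Definition complete_obstructions (V : vocab) (A : struct V) (Fs : seq (struct V)) : Prop :=
  (forall F, List.In F Fs -> nonempty F) /\
  forall B : struct V, nonempty B ->
    (hom_exists B A <-> ~ (exists F, List.In F Fs /\ hom_exists F B)).

Definition finite_duality (V : vocab) (A : struct V) : Prop :=
  exists Fs : seq (struct V), complete_obstructions A Fs.

Record pattern (sigma tau : vocab) := Pattern {
  pat_P : struct sigma;
  pat_Q : tau -> struct sigma;
  pat_q : forall (R : tau) (i : 'I_(arity R)), univ pat_P -> univ (pat_Q R);
  pat_q_hom : forall (R : tau) (i : 'I_(arity R)), is_hom pat_P (pat_Q R) (pat_q i) }.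
Arguments pat_P {sigma tau}.
Arguments pat_Q {sigma tau}.
Arguments pat_q {sigma tau} p {R}.

Section Psi.
Variables (sigma tau : vocab) (pat : pattern sigma tau) (A : struct sigma).

Definition psi_univ : finType :=
  {f : {ffun univ (pat_P pat) -> univ A} | is_hom (pat_P pat) A f}.

Definition psi_rel (R : tau) : pred ((arity R).-tuple psi_univ) :=
  fun t => [exists g : {ffun univ (pat_Q pat R) -> univ A},
             is_hom (pat_Q pat R) A g &&
             [forall i : 'I_(arity R), forall x : univ (pat_P pat),
                g (pat_q pat i x) == val (tnth t i) x]].

Definition Psi : struct tau := @Struct tau psi_univ psi_rel.
End Psi.

(* A structure Y has finite duality as soon as there is a bound K such
   that every nonempty B with B -/-> Y contains a "small witness": a nonempty B'
   with |B'| <= K, B' -> B and B' -/-> Y (the obstructions are then all structures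
   of size <= K not mapping to Y).  For Y = Psi A we glue, for a given B, copies of
   P (one per element of B) and of Q_R (one per R-tuple of B) into a sigma-structure
   Glue B, so that Glue B -> A implies B -> Psi A (this direction uses disjointness).
   Hence if B -/-> Psi A, some obstruction F of A maps to Glue B.  A homomorphism
   F -> Glue B only involves boundedly many elements of B (the entries of the facts
   hit by F together with one witnessing fact for each of them), and restricting B
   to them gives B' such that B' -> Psi A would yield F -> A, which is impossible. *)

From Stdlib Require Import List Classical.
From mathcomp Require Import all_boot.
Set Implicit Arguments. Unset Strict Implicit. Unset Printing Implicit Defensive.

Lemma homP (V : vocab) (X Y : struct V) (f : univ X -> univ Y) :
  reflect (forall R t, rel X R t -> rel Y R (map_tuple f t)) (is_hom X Y f).
Proof.
apply: (iffP forallP) => [Hf R t|Hf R]; first exact: implyP (forallP (Hf R) t).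
by apply/forallP => t; apply/implyP; apply: Hf.
Qed.

Lemma is_hom_ext (V : vocab) (X Y : struct V) (f g : univ X -> univ Y) :
  f =1 g -> is_hom X Y f -> is_hom X Y g.
Proof.
move=> fg /homP Hf; apply/homP => R t /Hf.
by have -> : map_tuple g t = map_tuple f t by apply: eq_from_tnth => i; rewrite !tnth_map fg.
Qed.

Lemma is_hom_comp (V : vocab) (X Y Z : struct V) f g :
  is_hom X Y f -> is_hom Y Z g -> is_hom X Z (g \o f).
Proof.
move=> /homP Hf /homP Hg; apply/homP => R t /Hf /Hg.
by have -> : map_tuple (g \o f) t = map_tuple g (map_tuple f t)
  by apply: eq_from_tnth => i; rewrite !tnth_map.
Qed.

Lemma hom_trans (V : vocab) (X Y Z : struct V) :
  hom_exists X Y -> hom_exists Y Z -> hom_exists X Z.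
Proof. by move=> [f Hf] [g Hg]; exists (g \o f); apply: is_hom_comp. Qed.

Lemma hom_refl (V : vocab) (X : struct V) : hom_exists X X.
Proof.
exists id; apply/homP => R t.
by have -> : map_tuple id t = t by apply: eq_from_tnth => i; rewrite tnth_map.
Qed.

Definition homb (V : vocab) (X Y : struct V) : bool :=
  [exists f : {ffun univ X -> univ Y}, is_hom X Y f].

Lemma hombP (V : vocab) (X Y : struct V) : reflect (hom_exists X Y) (homb X Y).
Proof.
apply: (iffP existsP) => [[f Hf]|[f Hf]]; first by exists f.
by exists [ffun x => f x]; apply: is_hom_ext Hf => x; rewrite ffunE.
Qed.

Lemma obstruction_no_hom (V : vocab) (A : struct V) Fs F :
  complete_obstructions A Fs -> nonempty A -> List.In F Fs -> ~ hom_exists F A.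
Proof. by move=> [_ HA] Ane FIn FA; apply: (proj1 (HA A Ane) (hom_refl A)); exists F. Qed.

Lemma obstruction_of_no_hom (V : vocab) (A B : struct V) Fs :
  complete_obstructions A Fs -> nonempty B -> ~ hom_exists B A ->
  exists F, List.In F Fs /\ hom_exists F B.
Proof. by move=> [_ HA] Bne nBA; apply: NNPP => none; apply/nBA/(HA B Bne). Qed.

Lemma list_bound (X : Type) (f : X -> nat) (s : list X) :
  exists K, forall x, List.In x s -> f x <= K.
Proof.
elim: s => [|y s [K HK]]; first by exists 0.
by exists (maxn (f y) K) => x /= [<-|/HK le]; rewrite ?leq_maxl // (leq_trans le) ?leq_maxr.
Qed.

(* The structures on the universe 'I_k, coded by their sets of facts. *)
Definition fact_code (V : vocab) (k : nat) := {R : V & (arity R).-tuple 'I_k}.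

Definition decode (V : vocab) (k : nat) (X : {set fact_code V k}) : struct V :=
  @Struct V 'I_k (fun R t => Tagged (fun R => (arity R).-tuple 'I_k) t \in X).

Lemma ordinal_copy (V : vocab) (X : struct V) :
  exists Xs : {set fact_code V #|univ X|},
    hom_exists (decode Xs) X /\ hom_exists X (decode Xs).
Proof.
pose Xs := [set p : fact_code V #|univ X| | rel X (tag p) (map_tuple enum_val (tagged p))].
exists Xs; split; first by exists enum_val; apply/homP => R t; rewrite /= inE.
exists enum_rank; apply/homP => R t Ht; rewrite /= inE /=.
suff -> : map_tuple enum_val (map_tuple enum_rank t) = t by [].
by apply: eq_from_tnth => i; rewrite !tnth_map enum_rankK.
Qed.

Lemma In_mem (T : eqType) (x : T) (s : seq T) : List.In x s <-> x \in s.
Proof.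
elim: s => [|y s IH] //=; rewrite in_cons; split.
- by case=> [->|/IH ->]; rewrite ?eqxx ?orbT.
- by case/orP=> [/eqP ->|/IH]; [left|right].
Qed.

Lemma small_obstructions (V : vocab) (Y : struct V) (K : nat) :
  exists Os : seq (struct V),
    (forall G, List.In G Os -> nonempty G /\ ~ hom_exists G Y) /\
    forall X, nonempty X -> #|univ X| <= K -> ~ hom_exists X Y ->
      exists G, List.In G Os /\ hom_exists G X.
Proof.
exists (List.flat_map (fun k => List.map (@decode V k)
   (List.filter (fun Xs => ~~ homb (decode Xs) Y) (enum {set fact_code V k}))) (iota 1 K)).
split=> [G|X Xne XK nXY].
  case/in_flat_map => k [/In_mem]; rewrite mem_iota => /andP[k_gt0 _].
  case/in_map_iff => Xs [<- /filter_In [_ /hombP nG]].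
  by split=> //; rewrite /nonempty card_ord.
have [Xs [XsX XXs]] := ordinal_copy X.
exists (decode Xs); split=> //; apply/in_flat_map; exists #|univ X|; split.
  by apply/In_mem; rewrite mem_iota add1n ltnS XK andbT.
apply/in_map_iff; exists Xs; split=> //; apply/filter_In; split.
  by apply/In_mem; rewrite mem_enum.
by apply/hombP => XsY; apply/nXY/(hom_trans XXs XsY).
Qed.

Lemma finite_duality_of_small_witnesses (V : vocab) (Y : struct V) (K : nat) :
  (forall B, nonempty B -> ~ hom_exists B Y ->
     exists B', [/\ nonempty B', #|univ B'| <= K, hom_exists B' B & ~ hom_exists B' Y]) ->
  finite_duality Y.
Proof.
move=> small; have [Os [OsY Oscomplete]] := small_obstructions Y K.
exists Os; split=> [G /OsY[]//|B Bne]; split.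
  by move=> BY [G [/OsY[_ nGY] GB]]; apply/nGY/(hom_trans GB BY).
move=> none; apply/hombP/negP => /hombP nBY.
have [B' [B'ne B'K B'B nB'Y]] := small B Bne nBY.
have [G [GIn GB']] := Oscomplete B' B'ne B'K nB'Y.
by apply: none; exists G; split=> //; apply: hom_trans GB' B'B.
Qed.

Definition images_disjoint (sigma tau : vocab) (pat : pattern sigma tau) : Prop :=
  forall (R : tau) (i j : 'I_(arity R)), i < j ->
    forall x y : univ (pat_P pat), pat_q pat i x <> pat_q pat j y.

Definition Slot (tau : vocab) := {R : tau & 'I_(arity R)}.

Section Glue.
Variables (sigma tau : vocab) (pat : pattern sigma tau) (B : struct tau).
Local Notation P := (pat_P pat).
Local Notation Q := (pat_Q pat).
Local Notation q := (pat_q pat).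

Definition witness (b : univ B) (Ri : Slot tau) : option ((arity (tag Ri)).-tuple (univ B)) :=
  [pick t | rel B (tag Ri) t && (tnth t (tagged Ri) == b)].

Lemma witness_spec (b : univ B) (Ri : Slot tau) t :
  witness b Ri = Some t -> rel B (tag Ri) t && (tnth t (tagged Ri) == b).
Proof. by rewrite /witness; case: pickP => // t' Ht' [<-]. Qed.

Definition witnesses_in (D : {set univ B}) (b : univ B) : Prop :=
  forall Ri t, witness b Ri = Some t -> {subset tval t <= D}.

Definition glue_edge (b : univ B) (x y : univ P) : bool :=
  [exists Ri : Slot tau, (witness b Ri != None) && (q (tagged Ri) x == q (tagged Ri) y)].

Lemma glue_edge_sym (b : univ B) : connect_sym (glue_edge b).
Proof.
apply: sym_connect_sym => x y; apply/existsP/existsP => -[Ri /andP[Hw /eqP E]];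
  by exists Ri; rewrite Hw E eqxx.
Qed.

Definition rep (b : univ B) (x : univ P) : univ P := root (glue_edge b) x.

(* Raw elements of the glued structure: a copy of P for every element of B and a
   copy of Q_R for every R-tuple of B. *)
Definition QCell := {R : tau & ((arity R).-tuple (univ B) * univ (Q R))%type}.
Definition Cell := ((univ B * univ P) + QCell)%type.

Definition preim (R : tau) (y : univ (Q R)) : option ('I_(arity R) * univ P) :=
  [pick ix : 'I_(arity R) * univ P | q ix.1 ix.2 == y].

(* Canonical representatives: a point of a copy of P is reduced to its glue class
   representative, and the point q_{R,i}(x) of the copy of Q_R at t is identified
   with the point x of the copy of P at t_i. *)
Definition normalize (z : Cell) : Cell :=
  match z with
  | inl (b, x) => inl (b, rep b x)
  | inr (existT R (t, y)) =>
      if preim y is Some (i, x) then inl (tnth t i, rep (tnth t i) x) else z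
  end.

Lemma normalize_idem (z : Cell) : normalize (normalize z) = normalize z.
Proof.
case: z => [[b x]|[R [t y]]] /=; first by rewrite /rep (root_root (glue_edge_sym b)).
case E: (preim y) => [[i x]|] /=; last by rewrite E.
by rewrite /rep (root_root (glue_edge_sym _)).
Qed.

Definition GlueU := {z : Cell | normalize z == z}.
Definition cls (z : Cell) : GlueU := exist _ (normalize z) (introT eqP (normalize_idem z)).

Definition glue_src (S : sigma) :=
  ((univ B * (arity S).-tuple (univ P)) +
   {R : tau & ((arity R).-tuple (univ B) * (arity S).-tuple (univ (Q R)))%type})%type.

Definition glue_fact (S : sigma) (p : glue_src S) (u : (arity S).-tuple GlueU) : bool :=
  match p with
  | inl (b, s) => rel P S s && (u == map_tuple (fun x => cls (inl (b, x))) s)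
  | inr (existT R (t, s)) => [&& rel B R t, rel (Q R) S s &
       u == map_tuple (fun y => cls (inr (existT _ R (t, y)))) s]
  end.

Definition fact_support (S : sigma) (p : glue_src S) : seq (univ B) :=
  match p with inl (b, _) => [:: b] | inr (existT R (t, _)) => tval t end.

Definition Glue : struct sigma :=
  @Struct sigma GlueU (fun S u => [exists p : glue_src S, glue_fact p u]).

Lemma Glue_nonempty : nonempty P -> nonempty B -> nonempty Glue.
Proof.
by move=> /card_gt0P [x _] /card_gt0P [b _]; apply/card_gt0P; exists (cls (inl (b, x))).
Qed.

Lemma glue_inl_hom (b : univ B) : is_hom P Glue (fun x => cls (inl (b, x))).
Proof. by apply/homP => S s Hs; apply/existsP; exists (inl (b, s)); rewrite /= Hs eqxx. Qed.

Lemma glue_inr_hom (R : tau) (t : (arity R).-tuple (univ B)) :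
  rel B R t -> is_hom (Q R) Glue (fun y => cls (inr (existT _ R (t, y)))).
Proof.
move=> Ht; apply/homP => S s Hs; apply/existsP.
by exists (inr (existT _ R (t, s))); rewrite /= Ht Hs eqxx.
Qed.

Lemma cls_glued (R : tau) (t : (arity R).-tuple (univ B)) (i : 'I_(arity R)) (x : univ P) :
  images_disjoint pat -> rel B R t ->
  cls (inr (existT _ R (t, q i x))) = cls (inl (tnth t i, x)).
Proof.
move=> disj Ht; apply: val_inj => /=; rewrite /preim.
case: pickP => [[i' x'] /= /eqP E|/(_ (i, x))]; last by rewrite /= eqxx.
have ii : i' = i.
  by case: (ltngtP i' i) => [lt|lt|/val_inj //];
    [case: (disj _ _ _ lt _ _ E)|case: (disj _ _ _ lt _ _ (esym E))].
subst i'.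
congr (inl (_, _)); apply/rootP; first exact: glue_edge_sym.
apply: connect1; apply/existsP; exists (Tagged (fun R => 'I_(arity R)) i) => /=.
by rewrite E eqxx andbT /witness; case: pickP => // /(_ t); rewrite Ht eqxx.
Qed.

(* A homomorphism k : Glue B -> A yields B -> Psi A, sending b to the restriction
   of k to the copy of P at b; the copies of Q_R at the R-facts of B show that
   R is preserved. *)
Lemma psi_hom_of_glue_hom (A : struct sigma) :
  images_disjoint pat -> hom_exists Glue A -> hom_exists B (Psi pat A).
Proof.
move=> disj [k Hk].
have hP b : is_hom P A [ffun x => k (cls (inl (b, x)))].
  by apply: is_hom_ext (is_hom_comp (glue_inl_hom b) Hk) => x; rewrite ffunE.
exists (fun b => exist (fun f : {ffun univ P -> univ A} => is_hom P A f) _ (hP b)).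
apply/homP => R t Ht.
apply/existsP; exists [ffun y => k (cls (inr (existT _ R (t, y))))]; apply/andP; split.
  by apply: is_hom_ext (is_hom_comp (glue_inr_hom Ht) Hk) => y; rewrite ffunE.
apply/forallP => i; apply/forallP => x.
by rewrite tnth_map !ffunE /= (cls_glued _ _ disj Ht).
Qed.

End Glue.

Definition induced (V : vocab) (B : struct V) (D : {set univ B}) : struct V :=
  @Struct V {b : univ B | b \in D} (fun R t => rel B R (map_tuple val t)).

Lemma induced_hom (V : vocab) (B : struct V) (D : {set univ B}) : hom_exists (induced D) B.
Proof. by exists val; apply/homP. Qed.

(* Conversely, a homomorphism into Psi A defined only on a subset D of B already
   determines values in A for the glued elements over D, and these respect every
   glued fact whose support lies in D together with its witnesses. *)
Section Pullback.
Variables (sigma tau : vocab) (pat : pattern sigma tau) (A : struct sigma) (B : struct tau).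
Variables (D : {set univ B}) (d0 : univ B) (d0D : d0 \in D).
Variables (h : univ (induced D) -> univ (Psi pat A)) (hh : is_hom (induced D) (Psi pat A) h).
Variable a0 : univ A.
Local Notation P := (pat_P pat).
Local Notation Q := (pat_Q pat).
Local Notation q := (pat_q pat).

(* The homomorphism P -> A attached to b (arbitrary outside D). *)
Definition hom_at (b : univ B) : {ffun univ P -> univ A} :=
  val (h (insubd (exist _ d0 d0D) b)).

Lemma hom_at_hom (b : univ B) : is_hom P A (hom_at b).
Proof. exact: (valP (h (insubd (exist _ d0 d0D) b))). Qed.

Definition ext_at (R : tau) (t : (arity R).-tuple (univ B)) : {ffun univ (Q R) -> univ A} :=
  if [pick g : {ffun univ (Q R) -> univ A} | is_hom (Q R) A g &&
        [forall i, forall x, g (q i x) == hom_at (tnth t i) x]] is Some g then g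
  else [ffun _ => a0].

(* For an R-fact of B inside D, such an extension exists since h preserves R. *)
Lemma ext_atP (R : tau) (t : (arity R).-tuple (univ B)) : rel B R t -> {subset tval t <= D} ->
  is_hom (Q R) A (ext_at t) /\ forall i x, ext_at t (q i x) = hom_at (tnth t i) x.
Proof.
move=> Ht tD; rewrite /ext_at; case: pickP => [g /andP[g_hom /forallP g_ext]|none].
  by split=> // i x; apply/eqP/(forallP (g_ext i) x).
pose t' := map_tuple (insubd (exist _ d0 d0D)) t.
have Ht' : rel (induced D) R t'.
  rewrite /= (_ : map_tuple val t' = t) //; apply: eq_from_tnth => i.
  by rewrite !tnth_map val_insubd ifT //; apply: tD; apply: mem_tnth.
have /homP/(_ R t' Ht')/existsP [g /andP[g_hom /forallP g_ext]] := hh.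
move: (none g); rewrite g_hom /= => /negP; case; apply/forallP => i; apply/forallP => x.
by have /forallP/(_ x) := g_ext i; rewrite !tnth_map.
Qed.

Lemma hom_at_rep (b : univ B) : witnesses_in D b -> forall x, hom_at b (rep b x) = hom_at b x.
Proof.
move=> bD x; have cl : closed (@glue_edge _ _ pat B b) [pred y | hom_at b y == hom_at b x].
  move=> y y' /existsP [Ri /andP[]]; case Ew: (witness b Ri) => [t|] // _ /eqP E.
  have /andP[Ht /eqP tb] := witness_spec Ew.
  have [_ ext] := ext_atP Ht (bD _ _ Ew).
  by rewrite !inE -tb -!ext E.
by have := closed_connect cl (connect_root _ x); rewrite !inE eqxx => /esym/eqP.
Qed.

Definition cell_value (z : Cell pat B) : univ A :=
  match z with
  | inl (b, x) => hom_at b x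
  | inr (existT R (t, y)) => ext_at t y
  end.

Lemma cell_value_inl (b : univ B) (x : univ P) :
  witnesses_in D b -> cell_value (val (cls (inl (b, x)))) = hom_at b x.
Proof. by move=> bW; rewrite /= hom_at_rep. Qed.

Lemma cell_value_inr (R : tau) (t : (arity R).-tuple (univ B)) (y : univ (Q R)) :
  rel B R t -> {subset tval t <= D} -> (forall c, c \in tval t -> witnesses_in D c) ->
  cell_value (val (cls (inr (existT _ R (t, y))))) = ext_at t y.
Proof.
move=> Ht tD tW; rewrite /= /preim; case: pickP => [[i x] /= /eqP <-|_] //=.
have [_ ext] := ext_atP Ht tD.
by rewrite hom_at_rep ?ext //; apply/tW/mem_tnth.
Qed.

Lemma glue_fact_value (S : sigma) (p : glue_src pat B S) (u : (arity S).-tuple (GlueU pat B)) :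
  glue_fact p u -> (forall c, c \in fact_support p -> c \in D /\ witnesses_in D c) ->
  rel A S (map_tuple (fun z => cell_value (val z)) u).
Proof.
case: p => [[b s]|[R [t s]]] /=.
  move=> /andP[Hs /eqP ->] /(_ b (mem_head _ _)) [_ bW].
  have -> : map_tuple (fun z => cell_value (val z)) (map_tuple (fun x => cls (inl (b, x))) s)
            = map_tuple (hom_at b) s.
    by apply: eq_from_tnth => i; rewrite !tnth_map cell_value_inl.
  by move/homP: (hom_at_hom b); apply.
move=> /and3P[Ht Hs /eqP ->] tDW.
have tD : {subset tval t <= D} by move=> c /tDW [].
have [ext_hom _] := ext_atP Ht tD.
have -> : map_tuple (fun z => cell_value (val z))
            (map_tuple (fun y => cls (inr (existT _ R (t, y)))) s) = map_tuple (ext_at t) s.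
  by apply: eq_from_tnth => i; rewrite !tnth_map cell_value_inr // => c /tDW [].
by move/homP: ext_hom; apply.
Qed.

End Pullback.

Lemma mem_nth_ord (X : eqType) (n : nat) (s : seq X) (x0 x : X) :
  size s < n -> x \in s -> exists j : 'I_n, nth x0 s j = x.
Proof.
move=> lt_s_n xs; have lt_x : index x s < n by apply: ltn_trans lt_s_n; rewrite index_mem.
by exists (Ordinal lt_x); rewrite nth_index.
Qed.

(* A strict upper bound on both 1 and the arities of tau. *)
Definition max_arity (tau : vocab) : nat := (\max_(R : tau) arity R).+2.

Lemma size_fact_lt (tau : vocab) (X : Type) (R : tau) (t : (arity R).-tuple X) :
  size t < max_arity tau.
Proof. by rewrite size_tuple ltnS leqW // (leq_bigmax R). Qed.

(* The facts of a structure, as tagged tuples of (not necessarily related) elements. *)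
Definition Facts (V : vocab) (F : struct V) := {S : V & (arity S).-tuple (univ F)}.

(* Addresses of the elements of B needed to pull back a map F -> Glue B: a
   default element, an entry of the support of the image of a fact of F, or an
   entry of a witness of such an entry.  Their number depends only on F and tau. *)
Definition Addr (sigma tau : vocab) (F : struct sigma) : finType :=
  option (Facts F * 'I_(max_arity tau) * option (Slot tau * 'I_(max_arity tau))).

Section SmallWitness.
Variables (sigma tau : vocab) (pat : pattern sigma tau) (A : struct sigma) (B : struct tau).
Variables (F : struct sigma) (phi : univ F -> GlueU pat B) (phi_hom : is_hom F (Glue pat B) phi).
Variable b0 : univ B.

Definition image_src (d : Facts F) : option (glue_src pat B (tag d)) :=
  [pick p | glue_fact p (map_tuple phi (tagged d))].

Definition image_support (d : Facts F) : seq (univ B) :=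
  if image_src d is Some p then fact_support p else [::].

Lemma size_image_support (d : Facts F) : size (image_support d) < max_arity tau.
Proof.
rewrite /image_support; case: (image_src d) => [[[b s]|[R [t s]]]|] //=.
exact: size_fact_lt.
Qed.

Definition address (x : Addr tau F) : univ B :=
  match x with
  | None => b0
  | Some (d, j, None) => nth b0 (image_support d) j
  | Some (d, j, Some (Ri, j')) =>
      if witness (nth b0 (image_support d) j) Ri is Some t then nth b0 t j' else b0
  end.

Definition needed : {set univ B} := address @: setT.

Lemma b0_needed : b0 \in needed.
Proof. by apply/imsetP; exists None. Qed.

Lemma card_needed : #|needed| <= #|Addr tau F|.
Proof. by rewrite -cardsT leq_imset_card. Qed.

Lemma support_needed (d : Facts F) (c : univ B) :
  c \in image_support d -> c \in needed /\ witnesses_in needed c.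
Proof.
move=> cd; have [j cj] := mem_nth_ord b0 (size_image_support d) cd.
split; first by apply/imsetP; exists (Some (d, j, None)); rewrite ?inE //= cj.
move=> Ri t Ew c' c't; have [j' c'j'] := mem_nth_ord b0 (size_fact_lt t) c't.
by apply/imsetP; exists (Some (d, j, Some (Ri, j'))); rewrite ?inE //= cj Ew.
Qed.

(* The key lemma: the substructure of B induced on the needed elements is a small
   witness, because a homomorphism from it to Psi A pulls phi back to F -> A. *)
Lemma small_witness (a0 : univ A) :
  exists B' : struct tau, [/\ nonempty B', #|univ B'| <= #|Addr tau F|,
    hom_exists B' B & (hom_exists B' (Psi pat A) -> hom_exists F A)].
Proof.
exists (induced needed); split=> [||| [h hh]].
- by apply/card_gt0P; exists (exist _ b0 b0_needed).
- by rewrite card_sig card_needed.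
- exact: induced_hom.
- exists (fun f => cell_value b0_needed h a0 (val (phi f))).
  apply/homP => S v Hv; pose d : Facts F := Tagged _ v.
  have [p Ep Hp] : exists2 p, image_src d = Some p & glue_fact p (map_tuple phi v).
    have /homP/(_ S v Hv)/existsP [p0 Hp0] := phi_hom.
    by rewrite /image_src; case: pickP => [p Hp|/(_ p0)]; [exists p | rewrite Hp0].
  suff -> : map_tuple (fun f => cell_value b0_needed h a0 (val (phi f))) v =
            map_tuple (fun z => cell_value b0_needed h a0 (val z)) (map_tuple phi v).
    apply: (glue_fact_value b0_needed hh a0 Hp) => c cp.
    by apply: (support_needed (d := d)); rewrite /image_support Ep.
  by apply: eq_from_tnth => i; rewrite !tnth_map.
Qed.

End SmallWitness.

Theorem theorem4p5 (sigma tau : vocab) (pat : pattern sigma tau) :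
  nonempty (pat_P pat) ->
  (forall R : tau, nonempty (pat_Q pat R)) ->
  (forall (R : tau) (i j : 'I_(arity R)), (i < j)%N ->
     forall x y : univ (pat_P pat), pat_q pat i x <> pat_q pat j y) ->
  forall A : struct sigma, nonempty A ->
    finite_duality A -> finite_duality (Psi pat A).
Proof.
move=> Pne _ disj A Ane [Fs obsA].
have [a0 _] := card_gt0P Ane.
have [K boundK] := list_bound (fun F => #|Addr tau F|) Fs.
apply: (@finite_duality_of_small_witnesses _ _ K) => B Bne nBPsi.
have nGlueA : ~ hom_exists (Glue pat B) A := fun GA => nBPsi (psi_hom_of_glue_hom disj GA).
have [F [FIn [phi phi_hom]]] := obstruction_of_no_hom obsA (Glue_nonempty Pne Bne) nGlueA.
have [b0 _] := card_gt0P Bne.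
have [B' [B'ne B'card B'B B'F]] := small_witness phi_hom b0 a0.
exists B'; split=> // [|B'Psi]; first exact: leq_trans B'card (boundK F FIn).
exact: obstruction_no_hom obsA Ane FIn (B'F B'Psi).
Qed.
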